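(* The total domination polynomials of the following graphs are unimodal: the helm graph $H_n$ ($n\ge 3$); the generalized helm graph $H_{n,m}$ ($n\ge 3$, $m\ge 1$); the graph $H(3)$ for every graph $H$; and every sunlike graph $G(v_1^{k_1},\dots,v_n^{k_n})$ with $k_1,\dots,k_n\ge 1$.
   Context: The wheel $W_n$ ($n\ge3$) is the cycle $C_n$ together with one extra vertex (hub) adjacent to all cycle vertices. The helm $H_n$ is obtained from $W_n$ by attaching one pendant edge at each vertex of the $n$-cycle; the generalized helm $H_{n,m}$ is obtained from $W_n$ by attaching $m$ pendant edges at each vertex of the $n$-cycle. For a graph $H$, $H(3)$ is obtained by identifying each vertex of $H$ with an end vertex of its own copy of the path $P_3$. For a graph $G$ with vertices $v_1,\dots,v_n$ and positive integers $k_i$, the sunlike graph $G(v_1^{k_1},\dots,v_n^{k_n})$ is obtained by attaching $k_i$ new pendant vertices to $v_i$ for each $i$. For a finite simple graph $G=(V,E)$, a set $D\subseteq V$ is a total dominating set if every vertex of $V$ is adjacent to some vertex of $D$; $d_t(G,i)$ is the number of total dominating sets of size $i$, and $D_t(G,x)=\sum_{i} d_t(G,i)x^i$. A polynomial $\sum a_ix^i$ is unimodal if $a_0\le\dots\le a_k\ge a_{k+1}\ge\dots\ge a_N$ for some $k$. *)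

From HB Require Import structures.
From mathcomp Require Import all_boot all_order all_algebra.
Set Implicit Arguments. Unset Strict Implicit. Unset Printing Implicit Defensive.
Import Order.TTheory GRing.Theory Num.Theory.
Local Open Scope ring_scope.

(* A finite simple graph is a finType T with a symmetric irreflexive
   adjacency relation e : rel T. *)

Definition total_dominating (T : finType) (e : rel T) (D : {set T}) : bool :=
  [forall v, [exists u in D, e v u]].

Definition dt (T : finType) (e : rel T) (i : nat) : nat :=
  #|[set D : {set T} | total_dominating e D & #|D| == i]|.

(* D_t(G,x) = sum_i d_t(G,i) x^i  (d_t(G,i) = 0 for i > |V|) *)
Definition Dt (T : finType) (e : rel T) : {poly int} :=
  \poly_(i < #|T|.+1) (dt e i)%:R.

Definition unimodal (p : {poly int}) : Prop :=
  exists k : nat,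
    (forall i j : nat, (i <= j <= k)%N -> p`_i <= p`_j) /\
    (forall i j : nat, (k <= i <= j)%N -> (j < size p)%N -> p`_j <= p`_i).

Definition cyc_adj (n : nat) (i j : 'I_n) : bool :=
  (nat_of_ord j == (nat_of_ord i).+1 %% n)%N || (nat_of_ord i == (nat_of_ord j).+1 %% n)%N.

(* Helm H_n: hub (inl tt), cycle vertices inr (inl i), pendant inr (inr i)
   attached to cycle vertex i. *)
Definition helm_V (n : nat) : finType := (unit + ('I_n + 'I_n))%type.
Definition helm_adj (n : nat) : rel (helm_V n) := fun x y =>
  match x, y with
  | inl _, inr (inl _) => true
  | inr (inl _), inl _ => true
  | inr (inl i), inr (inl j) => cyc_adj i j
  | inr (inl i), inr (inr j) => i == j
  | inr (inr i), inr (inl j) => i == j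
  | _, _ => false
  end.

(* Generalized helm H_{n,m}: pendants inr (inr (i, l)), l < m, attached to
   cycle vertex i. *)
Definition genhelm_V (n m : nat) : finType := (unit + ('I_n + 'I_n * 'I_m))%type.
Definition genhelm_adj (n m : nat) : rel (genhelm_V n m) := fun x y =>
  match x, y with
  | inl _, inr (inl _) => true
  | inr (inl _), inl _ => true
  | inr (inl i), inr (inl j) => cyc_adj i j
  | inr (inl i), inr (inr p) => i == p.1
  | inr (inr p), inr (inl j) => p.1 == j
  | _, _ => false
  end.

(* H(3): vertex (v,0) is v itself; (v,0)-(v,1)-(v,2) is the attached P_3. *)
Definition H3_adj (T : finType) (e : rel T) : rel (T * 'I_3)%type := fun x y =>
  [&& (nat_of_ord x.2 == 0)%N, (nat_of_ord y.2 == 0)%N & e x.1 y.1]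
  || ((x.1 == y.1) &&
      ((nat_of_ord x.2 == (nat_of_ord y.2).+1)%N || (nat_of_ord y.2 == (nat_of_ord x.2).+1)%N)).

(* Sunlike graph G(v^{k v}): original vertices inl v, and k v new pendant
   vertices inr (Tagged v l), l < k v, adjacent to v. *)
Definition sunlike_V (T : finType) (k : T -> nat) : finType :=
  (T + {v : T & 'I_(k v)})%type.
Definition sunlike_adj (T : finType) (e : rel T) (k : T -> nat) : rel (sunlike_V k) :=
  fun x y =>
  match x, y with
  | inl u, inl v => e u v
  | inl u, inr p => tag p == u
  | inr p, inl u => tag p == u
  | inr _, inr _ => false
  end.

From HB Require Import structures.
From mathcomp Require Import all_boot all_order all_algebra.
From mathcomp Require Import zify ring lra.
Set Implicit Arguments. Unset Strict Implicit. Unset Printing Implicit Defensive.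
Import Order.TTheory GRing.Theory Num.Theory.
Local Open Scope ring_scope.

(* In each of these graphs the vertex set carries a family F of pairwise
   disjoint nonempty "blocks" such that every block contains the whole
   neighbourhood of some vertex and every neighbourhood contains some block.
   Then D is total dominating exactly when D meets every block, so
     D_t(G, x) = (1 + x)^r * prod_(B in F) ((1 + x)^|B| - 1),
   r being the number of vertices outside all blocks.  Each factor has a
   nonnegative log-concave coefficient sequence without internal zeros (the
   property PF2 below), PF2 is preserved by products (a Binet-Cauchy type
   inequality), and PF2 sequences are unimodal. *)

(* Polya frequency of order 2: nonnegative coefficients such that
   p_i p_l <= p_j p_k whenever i <= j, k <= l and i + l = j + k; this is
   log-concavity together with the absence of internal zeros. *)
Definition PF2 (p : {poly int}) : Prop :=
  (forall i, 0 <= p`_i) /\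
  (forall i j k l : nat, (i <= j <= l)%N -> (i <= k <= l)%N -> (i + l = j + k)%N ->
     p`_i * p`_l <= p`_j * p`_k).

(* Once a PF2 sequence strictly descends it never rises again: each later
   step either strictly decreases or the sequence has already vanished. *)
Lemma PF2_descent (p : {poly int}) (k : nat) : PF2 p -> p`_k.+1 < p`_k ->
  forall m, (k <= m)%N -> p`_m.+1 <= p`_m.
Proof.
move=> [p_ge0 p_lc] desc_k.
have pk_gt0 : 0 < p`_k := le_lt_trans (p_ge0 _) desc_k.
have step t : (p`_(k + t).+1 < p`_(k + t)) || (p`_(k + t).+1 == 0).
  elim: t => [|t IH]; first by rewrite addn0 desc_k.
  rewrite addnS; case/boolP: (p`_(k + t).+1 == 0) => [/eqP vanish|nonzero].
    have := p_lc k k.+1 (k + t).+1 (k + t).+2; rewrite vanish mulr0 => lc.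
    have : p`_k * p`_(k + t).+2 <= 0 by apply: lc; lia.
    have := p_ge0 (k + t).+2; nia.
  move: IH; rewrite (negbTE nonzero) orbF => IH.
  have pos : 0 < p`_(k + t).+1 by rewrite lt_def nonzero p_ge0.
  have : p`_(k + t) * p`_(k + t).+2 <= p`_(k + t).+1 * p`_(k + t).+1.
    by apply: p_lc; lia.
  nia.
move=> m km; have := step (m - k)%N; rewrite subnKC //.
by case/orP=> [/ltW // | /eqP ->].
Qed.

(* The mode is the first descent (or the degree bound if there is none). *)
Lemma PF2_unimodal (p : {poly int}) : PF2 p -> unimodal p.
Proof.
move=> pf2.
have : exists m, (p`_m.+1 < p`_m) || (m == size p) by exists (size p); rewrite eqxx orbT.
case/ex_minnP=> k k_stop k_min; exists k; split.
  have rise m : p`_(minn m k) <= p`_(minn m.+1 k).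
    case: (ltnP m k) => [mk | km]; last by rewrite !(minn_idPr _) // ltnW.
    rewrite !(minn_idPl _) // leNgt; apply/negP => desc.
    by have := k_min m; rewrite desc => /(_ isT); rewrite leqNgt mk.
  move=> i j /andP[ij jk].
  have := @homo_leq _ (fun m => p`_(minn m k)) _ (@lexx _ _) (@le_trans _ _) rise i j ij.
  by rewrite !(minn_idPl _) // (leq_trans ij jk).
move=> i j /andP[ki ij] j_lt; case/orP: k_stop => [desc|/eqP k_size]; last by lia.
have fall t : p`_(k + t.+1) <= p`_(k + t).
  by rewrite addnS; apply: (PF2_descent pf2 desc); apply: leq_addr.
have := @homo_leq _ (fun t => p`_(k + t)) (fun x y => y <= x) (@lexx _ _)
  (fun y x z xy yz => le_trans yz xy) fall (i - k)%N (j - k)%N.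
by rewrite !subnKC //; [apply; lia | lia].
Qed.

(* Binet-Cauchy inequality: twice the difference of the two sides is the
   double sum of the 2x2 minor products, which are nonnegative. *)
Lemma binet_cauchy_le (R : realDomainType) (u u' v v' : nat -> R) (L : nat) :
  (forall a b, (a < b)%N -> 0 <= (u a * u' b - u b * u' a) * (v a * v' b - v b * v' a)) ->
  (\sum_(0 <= a < L) u a * v' a) * (\sum_(0 <= a < L) u' a * v a) <=
  (\sum_(0 <= a < L) u a * v a) * (\sum_(0 <= a < L) u' a * v' a).
Proof.
move=> minors_ge0.
pose minor a b := (u a * u' b - u b * u' a) * (v a * v' b - v b * v' a).
have minor_ge0 a b : 0 <= minor a b.
  case: (ltngtP a b) => [/minors_ge0 // | ba | ->]; last by rewrite /minor subrr mul0r.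
  have -> : minor a b = minor b a by rewrite /minor; ring.
  exact: minors_ge0.
pose G a b := u a * v a * (u' b * v' b) - u a * v' a * (u' b * v b).
pose S := \sum_(0 <= a < L) \sum_(0 <= b < L) G a b.
have diff : (\sum_(0 <= a < L) u a * v a) * (\sum_(0 <= a < L) u' a * v' a) -
            (\sum_(0 <= a < L) u a * v' a) * (\sum_(0 <= a < L) u' a * v a) = S.
  rewrite !big_distrl /= -sumrB; apply: eq_bigr => a _.
  by rewrite !big_distrr /= -sumrB.
have double : S + S = \sum_(0 <= a < L) \sum_(0 <= b < L) minor a b.
  rewrite {2}/S exchange_big_nat /= -big_split /=; apply: eq_bigr => a _.
  by rewrite -big_split /=; apply: eq_bigr => b _; rewrite /G /minor; ring.
have : 0 <= \sum_(0 <= a < L) \sum_(0 <= b < L) minor a b.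
  by apply: sumr_ge0 => a _; apply: sumr_ge0.
rewrite -double -diff -subr_ge0; lra.
Qed.

(* coef_from q n a is the coefficient of q at n - a, read as 0 when a > n;
   it is the second factor of the a-th term of (p * q)_n. *)
Definition coef_from (q : {poly int}) (n a : nat) : int :=
  if (a <= n)%N then q`_(n - a) else 0.

Lemma coefM_window (p q : {poly int}) (n M : nat) : (n < M)%N ->
  (p * q)`_n = \sum_(0 <= a < M) p`_a * coef_from q n a.
Proof.
move=> nM; rewrite coefM (big_ord_widen M (fun a => p`_a * q`_(n - a))) //.
rewrite big_mkcond [RHS]big_mkord; apply: eq_bigr => a _.
by rewrite /coef_from ltnS; case: (a <= n)%N; rewrite ?mulr0.
Qed.

Lemma PF2_shift_minor (p : {poly int}) (e a b : nat) : PF2 p -> (a < b)%N ->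
  0 <= p`_a * ('X^e * p)`_b - p`_b * ('X^e * p)`_a.
Proof.
move=> [p_ge0 p_lc] ab; rewrite !coefXnM.
case: (ltnP a e) => [ae|ea]; last first.
  rewrite ltnNge (leq_trans ea (ltnW ab)) /= subr_ge0 mulrC; apply: p_lc; lia.
rewrite mulr0 subr0; case: ifP => _; rewrite ?mulr0 //; exact: mulr_ge0.
Qed.

Lemma PF2_window_minor (q : {poly int}) (k l a b : nat) : PF2 q -> (a < b)%N -> (k <= l)%N ->
  0 <= coef_from q k a * coef_from q l b - coef_from q k b * coef_from q l a.
Proof.
move=> [q_ge0 q_lc] ab kl; rewrite /coef_from.
case: (leqP b k) => [bk|kb]; last first.
  rewrite mul0r subr0.
  by case: ifP; case: ifP => _ _; rewrite ?mulr0 ?mul0r // mulr_ge0.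
rewrite (leq_trans bk kl) (leq_trans (ltnW ab) bk) (leq_trans (ltnW ab) (leq_trans bk kl)).
rewrite subr_ge0; apply: q_lc; lia.
Qed.

(* PF2 is closed under products: writing (pq)_i and (pq)_j as convolutions
   of 'X^e * p with q, where e = k - i, the PF2 inequality for p * q is an
   instance of binet_cauchy_le. *)
Lemma PF2M (p q : {poly int}) : PF2 p -> PF2 q -> PF2 (p * q).
Proof.
move=> pf2p pf2q; have [p_ge0 _] := pf2p; have [q_ge0 _] := pf2q; split.
  by move=> n; rewrite coefM; apply: sumr_ge0 => a _; apply: mulr_ge0.
move=> i j k l /andP[ij jl] /andP[ik kl] sum_eq.
pose e := (k - i)%N; pose M := (l.+1 + e)%N.
have shifted n : (p * q)`_n = ('X^e * p * q)`_(n + e).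
  by rewrite -mulrA coefXnM ltnNge leq_addl /= addnK.
have [ie_k je_l] : (i + e = k)%N /\ (j + e = l)%N by lia.
have [k_M l_M] : (k < M)%N /\ (l < M)%N by lia.
rewrite (shifted i) (shifted j) ie_k je_l !(coefM_window _ _ k_M) !(coefM_window _ _ l_M).
rewrite mulrC [X in _ <= X]mulrC.
apply: binet_cauchy_le => a b ab; apply: mulr_ge0.
  exact: PF2_shift_minor.
by apply: PF2_window_minor.
Qed.

Lemma PF2_indicator (p : {poly int}) (m : nat) : (forall i, p`_i = (i <= m)%N%:R) -> PF2 p.
Proof.
move=> coef_p; split=> [i | i j k l /andP[ij jl] /andP[ik kl] _]; first by rewrite coef_p.
rewrite !coef_p; case: (leqP l m) => lm.
  by rewrite !(leq_trans _ lm) ?(leq_trans ij) ?(leq_trans ik).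
by rewrite mulr0 mulr_ge0.
Qed.

Lemma PF2_drop_constant (p q : {poly int}) : PF2 p -> q`_0 = 0 ->
  (forall i, (0 < i)%N -> q`_i = p`_i) -> PF2 q.
Proof.
move=> [p_ge0 p_lc] q0 q_eq.
have q_ge0 i : 0 <= q`_i by case: i => [|i]; rewrite ?q0 // q_eq.
split=> // -[|i] j k l /andP[ij jl] /andP[ik kl] sum_eq.
  by rewrite q0 mul0r mulr_ge0.
rewrite !q_eq //; try lia; apply: p_lc => //; rewrite ?ij ?ik; lia.
Qed.

Section SubsetGF.
Variable V : finType.

Definition subset_gf (U : {set V}) (P : pred {set V}) : {poly int} :=
  \sum_(D : {set V} | (D \subset U) && P D) 'X^#|D|.

Lemma coef_subset_gf (U : {set V}) (P : pred {set V}) (i : nat) :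
  (subset_gf U P)`_i = \sum_(D : {set V} | (D \subset U) && P D) (#|D| == i)%:R.
Proof. by rewrite /subset_gf coef_sum; apply: eq_bigr => D _; rewrite coefXn eq_sym. Qed.

Lemma setIU_disjoint (U1 U2 D1 D2 : {set V}) : [disjoint U1 & U2] ->
  D1 \subset U1 -> D2 \subset U2 -> (D1 :|: D2) :&: U1 = D1 /\ (D1 :|: D2) :&: U2 = D2.
Proof.
move=> dis sub1 sub2.
have D1U2 : D1 :&: U2 = set0 by apply/disjoint_setI0/(disjointWl sub1).
have D2U1 : D2 :&: U1 = set0.
  by apply/disjoint_setI0/(disjointWl sub2); rewrite disjoint_sym.
by rewrite !setIUl (setIidPl sub1) (setIidPl sub2) D1U2 D2U1 setU0 set0U.
Qed.

Lemma subset_gf_disjointU (U1 U2 : {set V}) (P P1 P2 : pred {set V}) :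
  [disjoint U1 & U2] ->
  (forall D : {set V}, D \subset U1 :|: U2 -> P D = P1 (D :&: U1) && P2 (D :&: U2)) ->
  subset_gf (U1 :|: U2) P = subset_gf U1 P1 * subset_gf U2 P2.
Proof.
move=> dis P_split; rewrite /subset_gf big_distrl /=.
rewrite (partition_big (fun D => D :&: U1) (fun D1 => (D1 \subset U1) && P1 D1)) /=; last first.
  by move=> D /andP[sD]; rewrite subsetIr P_split // => /andP[].
apply: eq_bigr => D1 /andP[sub1 P1D1]; rewrite big_distrr /=.
rewrite (reindex_onto (fun D2 => D1 :|: D2) (fun D => D :&: U2)) /=; last first.
  by move=> D /andP[/andP[sD _] /eqP <-]; rewrite -setIUr; apply/setIidPl.
apply: eq_big => [D2 | D2 /andP[_ /eqP D2_eq]]; last first.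
  have sub2 : D2 \subset U2 by rewrite -D2_eq subsetIr.
  by rewrite -exprD cardsU (disjoint_setI0 (disjointWl sub1 (disjointWr sub2 dis))) cards0 subn0.
case/boolP: (D2 \subset U2) => [sub2 | nsub2]; last first.
  by apply/negbTE; apply: contra nsub2 => /andP[_ /eqP <-]; rewrite subsetIr.
have [D1_eq D2_eq] := setIU_disjoint dis sub1 sub2.
by rewrite P_split ?setUSS // D1_eq D2_eq P1D1 !eqxx !andbT.
Qed.

Lemma subset_gf_set0 : subset_gf (set0 : {set V}) predT = 1.
Proof.
rewrite /subset_gf (big_pred1 set0) ?cards0 ?expr0 // => D.
by rewrite subset0 andbT.
Qed.

Lemma subset_gf_set1 (a : V) : subset_gf [set a] predT = 1 + 'X.
Proof.
rewrite /subset_gf (bigD1 set0) ?sub0set //= cards0 expr0.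
rewrite (big_pred1 [set a]) ?cards1 ?expr1 // => D.
rewrite /= subset1 andbT; case: (D =P set0) => [->|/eqP D_ne0]; last by rewrite orbF andbT.
by rewrite orbT andbF; apply/esym/eqP/setP => /(_ a); rewrite !inE eqxx.
Qed.

Lemma PF2_subset_gf_all (U : {set V}) : PF2 (subset_gf U predT).
Proof.
elim: {U}#|U| {-2}U (erefl #|U|) => [|n IH] U card_U.
  rewrite (cards0_eq card_U) subset_gf_set0.
  by apply: (@PF2_indicator _ 0) => i; rewrite coef1 leqn0.
have [a aU] : exists a, a \in U by apply/set0Pn; rewrite -card_gt0 card_U.
rewrite -(setD1K aU) (@subset_gf_disjointU _ _ _ predT predT) //; last first.
  by rewrite disjoints1 !inE eqxx.
apply: PF2M; last by apply: IH; move: card_U; rewrite (cardsD1 a U) aU add1n => -[].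
apply: (@PF2_indicator _ 1) => i; rewrite subset_gf_set1 coefD coef1 coefX.
by case: i => [|[|i]].
Qed.

Lemma PF2_subset_gf_nonempty (B : {set V}) : PF2 (subset_gf B (fun D => D != set0)).
Proof.
apply: (PF2_drop_constant (PF2_subset_gf_all B)).
  by rewrite coef_subset_gf big1 // => D /andP[_]; rewrite -cards_eq0 => /negbTE ->.
move=> i i_gt0; rewrite !coef_subset_gf [LHS]big_mkcond [RHS]big_mkcond.
apply: eq_bigr => D _ /=; case: (D =P set0) => [->|] //=.
by rewrite cards0 eq_sym (gtn_eqF i_gt0) !if_same.
Qed.

Definition hits (F : {set {set V}}) : pred {set V} :=
  fun D => [forall B in F, D :&: B != set0].

Lemma hits_setD1 (F : {set {set V}}) (B U D : {set V}) : B \in F -> trivIset F ->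
  (forall B', B' \in F -> B' \subset U) ->
  hits F D = (D :&: B != set0) && hits (F :\ B) (D :&: (U :\: B)).
Proof.
move=> BF triv sub; apply/forallP/andP.
  move=> hitsF; split; first by have := hitsF B; rewrite BF.
  apply/forallP => B'; apply/implyP; rewrite !inE => /andP[B'B B'F].
  have dis : [disjoint B' & B] by move/trivIsetP: triv => /(_ B' B B'F BF B'B).
  rewrite -setIA (_ : (U :\: B) :&: B' = B'); first by have := hitsF B'; rewrite B'F.
  by apply/setIidPr; rewrite subsetD sub // disjoint_sym.
case=> hitB /forallP hitsF' B'; apply/implyP => B'F; case: (B' =P B) => [-> // | /eqP B'B].
have := hitsF' B'; rewrite !inE B'B B'F /=; apply: contra => /eqP D_B'.
by rewrite setIAC D_B' set0I.
Qed.

Lemma PF2_subset_gf_hits (F : {set {set V}}) (U : {set V}) : trivIset F ->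
  (forall B, B \in F -> B \subset U) -> PF2 (subset_gf U (hits F)).
Proof.
elim: {F}#|F| {-2}F (erefl #|F|) U => [|n IH] F card_F U triv sub.
  have -> : subset_gf U (hits F) = subset_gf U predT.
    apply: eq_bigl => D; rewrite (cards0_eq card_F) andbT; apply/andb_idr => _.
    by apply/forallP => B; rewrite inE.
  exact: PF2_subset_gf_all.
have [B BF] : exists B, B \in F by apply/set0Pn; rewrite -card_gt0 card_F.
have U_split : U = B :|: (U :\: B) by rewrite -{1}(setID U B) (setIidPr (sub B BF)).
rewrite U_split (@subset_gf_disjointU _ _ _ (fun D => D != set0) (hits (F :\ B))).
- apply: PF2M; first exact: PF2_subset_gf_nonempty.
  apply: IH; first by move: card_F; rewrite (cardsD1 B F) BF add1n => -[].
    by apply: trivIsetS triv; apply: subD1set.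
  move=> B'; rewrite !inE => /andP[B'B B'F].
  by rewrite subsetD sub // (trivIsetP triv B' B B'F BF B'B).
- by rewrite disjoints_subset; apply/subsetP => x xB; rewrite !inE xB.
- by move=> D _; rewrite (hits_setD1 _ BF triv sub) setIDA.
Qed.

End SubsetGF.

Lemma Dt_subset_gf (T : finType) (e : rel T) : Dt e = subset_gf [set: T] (total_dominating e).
Proof.
apply/polyP => i; rewrite coef_poly coef_subset_gf.
have -> : \sum_(D : {set T} | (D \subset [set: T]) && total_dominating e D) (#|D| == i)%:R
          = (dt e i)%:R :> int.
  rewrite -natr_sum /dt -sum1dep_card; congr (_%:R); rewrite [RHS]big_mkcondr /=.
  by apply: eq_big => [D | D _]; [rewrite subsetT | case: (#|D| == i)].
case: ltnP => // big_i; suff -> : dt e i = 0%N by [].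
apply/eqP; rewrite cards_eq0; apply/eqP/setP => D.
rewrite !inE; apply/negbTE/andP => -[_ /eqP card_D].
by have := max_card D; rewrite card_D leqNgt big_i.
Qed.

Lemma total_dominating_hits (T : finType) (e : rel T) (F : {set {set T}}) :
  (forall B, B \in F -> exists v, forall u, e v u -> u \in B) ->
  (forall v, exists2 B, B \in F & forall u, u \in B -> e v u) ->
  forall D, total_dominating e D = hits F D.
Proof.
move=> block_in_nbhd nbhd_has_block D; apply/forallP/forallP => [dom B | hit v].
  apply/implyP => BF; have [v B_nbhd] := block_in_nbhd B BF.
  have /existsP [u /andP[uD evu]] := dom v.
  by apply/set0Pn; exists u; rewrite inE uD B_nbhd.
have [B BF B_nbhd] := nbhd_has_block v.
have /implyP/(_ BF)/set0Pn [u] := hit B; rewrite inE => /andP[uD uB].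
by apply/existsP; exists u; rewrite uD B_nbhd.
Qed.

Definition label_block (V L : finType) (lab : V -> option L) (l : L) : {set V} :=
  [set u | lab u == Some l].

Lemma unimodal_Dt_of_labelling (V L : finType) (e : rel V) (lab : V -> option L) :
  (forall l u0, lab u0 = Some l -> exists v, forall u, e v u -> lab u = Some l) ->
  (forall v, exists l u0, lab u0 = Some l /\ forall u, lab u = Some l -> e v u) ->
  unimodal (Dt e).
Proof.
move=> block_in_nbhd nbhd_has_block.
pose F := [set label_block lab l | l in [pred l | label_block lab l != set0]].
have triv : trivIset F.
  apply/trivIsetP => _ _ /imsetP[l1 _ ->] /imsetP[l2 _ ->] neq.
  rewrite -setI_eq0; apply/eqP/setP => u; rewrite !inE.
  apply/negbTE/andP => -[/eqP lab1 /eqP lab2]; move/negP: neq; apply.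
  by move: lab2; rewrite lab1 => -[->].
rewrite Dt_subset_gf; apply: PF2_unimodal.
have -> : subset_gf [set: V] (total_dominating e) = subset_gf [set: V] (hits F).
  apply: eq_bigl => D; congr andb; apply: total_dominating_hits.
  - move=> B /imsetP[l]; rewrite inE => /set0Pn[u0]; rewrite inE => /eqP lab_u0 ->.
    have [v nbhd] := block_in_nbhd _ _ lab_u0; exists v => u /nbhd lab_u.
    by rewrite inE lab_u.
  - move=> v; have [l [u0 [lab_u0 block]]] := nbhd_has_block v; exists (label_block lab l).
      by apply/imsetP; exists l => //; rewrite inE; apply/set0Pn; exists u0; rewrite inE lab_u0.
    by move=> u; rewrite inE => /eqP /block.
by apply: PF2_subset_gf_hits => // B _; apply: subsetT.
Qed.

(* Helm: the blocks are the single cycle vertices; cycle vertex i is the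
   only neighbour of its pendant, and every vertex is adjacent to some cycle
   vertex (the hub to vertex 0, cycle vertex i to i + 1 mod n). *)
Lemma helm_unimodal (n : nat) : (3 <= n)%N -> unimodal (Dt (@helm_adj n)).
Proof.
move=> n_ge3; have n_gt0 : (0 < n)%N by apply: leq_trans n_ge3.
pose lab (x : helm_V n) : option 'I_n := if x is inr (inl i) then Some i else None.
apply: (@unimodal_Dt_of_labelling _ _ _ lab).
- by move=> l u0 _; exists (inr (inr l)) => -[[]|[j|j]] //= /eqP ->.
- case=> [[]|[i|i]].
  + by exists (Ordinal n_gt0), (inr (inl (Ordinal n_gt0))); split => // -[[]|[j|j]].
  + pose i' := Ordinal (ltn_pmod i.+1 n_gt0); exists i', (inr (inl i')).
    by split => // -[[]|[j|j]] //= [->]; rewrite /cyc_adj /= eqxx.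
  + by exists i, (inr (inl i)); split => // -[[]|[j|j]] //= [->].
Qed.

(* Generalized helm: the same blocks, forced by any of the m >= 1 pendants. *)
Lemma genhelm_unimodal (n m : nat) : (3 <= n)%N -> (1 <= m)%N ->
  unimodal (Dt (@genhelm_adj n m)).
Proof.
move=> n_ge3 m_gt0; have n_gt0 : (0 < n)%N by apply: leq_trans n_ge3.
pose lab (x : genhelm_V n m) : option 'I_n := if x is inr (inl i) then Some i else None.
apply: (@unimodal_Dt_of_labelling _ _ _ lab).
- by move=> l u0 _; exists (inr (inr (l, Ordinal m_gt0))) => -[[]|[j|j]] //= /eqP ->.
- case=> [[]|[i|[i l]]].
  + by exists (Ordinal n_gt0), (inr (inl (Ordinal n_gt0))); split => // -[[]|[j|j]].
  + pose i' := Ordinal (ltn_pmod i.+1 n_gt0); exists i', (inr (inl i')).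
    by split => // -[[]|[j|j]] //= [->]; rewrite /cyc_adj /= eqxx.
  + by exists i, (inr (inl i)); split => // -[[]|[j|j]] //= [->].
Qed.

(* H(3): for each path (v,0)-(v,1)-(v,2) the blocks are {(v,1)}, forced by
   (v,2), and {(v,0), (v,2)}, the neighbourhood of (v,1). *)
Lemma H3_unimodal (T : finType) (e : rel T) : unimodal (Dt (H3_adj e)).
Proof.
pose lab (x : (T * 'I_3)%type) : option (T + T)%type :=
  if (nat_of_ord x.2 == 1)%N then Some (inl x.1) else Some (inr x.1).
have o0 : (0 < 3)%N by []. have o1 : (1 < 3)%N by []. have o2 : (2 < 3)%N by [].
apply: (@unimodal_Dt_of_labelling _ _ _ lab).
- move=> [w|w] u0 _.
  + exists (w, Ordinal o2) => -[u1 [u2 u2_lt3]]; rewrite /H3_adj /lab /=.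
    by case: u2 u2_lt3 => [|[|[|]]] //= _; rewrite ?andbF // => /andP[/eqP -> _].
  + exists (w, Ordinal o1) => -[u1 [u2 u2_lt3]]; rewrite /H3_adj /lab /=.
    by case: u2 u2_lt3 => [|[|[|]]] //= _; rewrite ?andbF ?andbT // => /eqP ->.
- move=> [w [t t_lt3]]; case: t t_lt3 => [|[|[|//]]] t_lt3;
    [exists (inl w), (w, Ordinal o1) | exists (inr w), (w, Ordinal o0)
    | exists (inl w), (w, Ordinal o1)];
    split => // -[u1 [u2 u2_lt3]]; rewrite /H3_adj /lab /=;
    by case: u2 u2_lt3 => [|[|[|]]] //= _ [->]; rewrite eqxx.
Qed.

(* Sunlike graph: each original vertex v is a block forced by its pendants;
   for an isolated original vertex v its pendants form a further block,
   namely the neighbourhood of v. *)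
Lemma sunlike_unimodal (T : finType) (e : rel T) (k : T -> nat) :
  (forall v, (1 <= k v)%N) -> unimodal (Dt (@sunlike_adj T e k)).
Proof.
move=> k_gt0.
pose isolated (v : T) := [forall u, ~~ e v u].
pose lab (x : sunlike_V k) : option (T + T)%type :=
  match x with
  | inl v => Some (inl v)
  | inr p => if isolated (tag p) then Some (inr (tag p)) else None
  end.
pose pendant (w : T) : sunlike_V k := inr (Tagged (fun v => 'I_(k v)) (Ordinal (k_gt0 w))).
apply: (@unimodal_Dt_of_labelling _ _ _ lab).
- move=> [w|w] u0 lab_u0.
  + by exists (pendant w) => -[u|p] //= /eqP <-.
  + case: u0 lab_u0 => [u|p] //=; case: ifP => // iso_p [p_w].
    exists (inl w) => -[u|p'] /=.
      by move: iso_p; rewrite p_w => /forallP /(_ u) /negbTE ->.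
    by move/eqP => ->; rewrite -p_w iso_p.
- move=> [w|p].
  + case/boolP: (isolated w) => iso_w.
      exists (inr w), (pendant w); split; first by rewrite /= iso_w.
      by move=> [u|p] //=; case: ifP => // _ [<-].
    move: iso_w; rewrite negb_forall => /existsP [u /negbNE e_wu].
    by exists (inl u), (inl u); split => // -[u'|p] //=; [move=> [->] | case: ifP].
  + by exists (inl (tag p)), (inl (tag p)); split => // -[u|p'] //=; [move=> [->] | case: ifP].
Qed.

Theorem mainTheorem11 :
  (forall n : nat, (3 <= n)%N -> unimodal (Dt (@helm_adj n))) /\
  (forall n m : nat, (3 <= n)%N -> (1 <= m)%N -> unimodal (Dt (@genhelm_adj n m))) /\
  (forall (T : finType) (e : rel T), symmetric e -> irreflexive e ->
     unimodal (Dt (H3_adj e))) /\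
  (forall (T : finType) (e : rel T) (k : T -> nat), symmetric e -> irreflexive e ->
     (forall v, (1 <= k v)%N) -> unimodal (Dt (@sunlike_adj T e k))).
Proof.
split; first exact: helm_unimodal.
split; first exact: genhelm_unimodal.
split; first by move=> T e _ _; apply: H3_unimodal.
by move=> T e k _ _; apply: sunlike_unimodal.
Qed.
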